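(* Let $T\in\mathcal{B}(\mathcal{H})$ be a self-adjoint operator which is the pencil of a pair of projections at $\lambda\in\mathbb{R}$ and the pencil of a pair of projections at $\mu\in\mathbb{R}$. If one of $\lambda$ and $\mu$ is zero, then the other belongs to $\{-1,0,1\}$.
   Context: $\mathcal{H}$ is an infinite-dimensional complex Hilbert space; ''projection'' means orthogonal projection. For $\lambda\in\mathbb{R}$, $T$ is the pencil of a pair of projections at $\lambda$ if $T=\lambda P+Q$ for some nonzero projections $P,Q\in\mathcal{B}(\mathcal{H})$. *)

From HB Require Import structures.
From mathcomp Require Import all_boot all_order all_algebra.
From mathcomp Require Import complex.
From mathcomp Require Import reals.
Set Implicit Arguments. Unset Strict Implicit. Unset Printing Implicit Defensive.
Import Order.TTheory GRing.Theory Num.Theory.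
Local Open Scope ring_scope.

Section Hilbert.
Variables (R : realType) (V : lmodType R[i]) (ip : V -> V -> R[i]).

Definition ipnorm (x : V) : R := Num.sqrt (complex.Re (ip x x)).

Definition inner_product_axioms : Prop :=
  [/\ (forall (a : R[i]) x y z, ip (a *: x + y) z = a * ip x z + ip y z),
      (forall x y, ip y x = (ip x y)^*),
      (forall x, 0 <= ip x x) &
      (forall x, ip x x = 0 -> x = 0)].

Definition complete_ip : Prop :=
  forall u : nat -> V,
    (forall e : R, 0 < e -> exists N, forall m n, (N <= m)%N -> (N <= n)%N ->
        ipnorm (u m - u n) < e) ->
    exists l : V, forall e : R, 0 < e -> exists N, forall n, (N <= n)%N ->
        ipnorm (u n - l) < e.

Definition complex_hilbert_space : Prop :=
  inner_product_axioms /\ complete_ip.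

Definition infinite_dimensional : Prop :=
  forall n : nat, exists v : 'I_n -> V,
    forall c : 'I_n -> R[i], \sum_(i < n) c i *: v i = 0 -> forall i, c i = 0.

Definition bounded_operator (T : V -> V) : Prop :=
  [/\ (forall x y, T (x + y) = T x + T y),
      (forall (a : R[i]) x, T (a *: x) = a *: T x) &
      (exists M : R, forall x, ipnorm (T x) <= M * ipnorm x)].

Definition self_adjoint (T : V -> V) : Prop :=
  bounded_operator T /\ forall x y, ip (T x) y = ip x (T y).

Definition projection (P : V -> V) : Prop :=
  self_adjoint P /\ forall x, P (P x) = P x.

Definition nonzero_op (P : V -> V) : Prop := exists x, P x <> 0.

Definition pencil_at (T : V -> V) (lam : R) : Prop :=
  exists P Q : V -> V,
    [/\ projection P, nonzero_op P, projection Q, nonzero_op Q &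
        forall x, T x = (lam%:C)%C *: P x + Q x].

End Hilbert.

From HB Require Import structures.
From mathcomp Require Import all_boot all_order all_algebra.
From mathcomp Require Import complex.
From mathcomp Require Import reals.
Import Order.TTheory GRing.Theory Num.Theory.
Local Open Scope ring_scope.

(* At lam = 0 the operator T = Q0 is idempotent.  If moreover
   T = a P + Q with idempotents P, Q and a <> 0, expanding T^2 = T gives
   (a - 1) P + P Q + Q P = 0.  Evaluated at u = P x0 <> 0 and compared with
   its image under P, this yields v := Q u = P v and 2 v = (1 - a) u; applying
   Q instead yields (a + 1) v = 0.  Hence (1 - a)(1 + a) u = 0, i.e. a = 1 or
   a = -1. *)

Section IdempotentPencil.
Variables (K : fieldType) (V : lmodType K) (P Q : V -> V) (a : K).
Hypotheses (P_add : {morph P : x y / x + y}) (Q_add : {morph Q : x y / x + y}).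
Hypotheses (P_scale : forall c, {morph P : x / c *: x})
           (Q_scale : forall c, {morph Q : x / c *: x}).
Hypotheses (P_idem : idempotent_fun P) (Q_idem : idempotent_fun Q).
Hypothesis pencil_idem : idempotent_fun (fun x => a *: P x + Q x).
Hypothesis a_neq0 : a != 0.

Lemma idempotent_pencil_relation x : (a - 1) *: P x + P (Q x) + Q (P x) = 0.
Proof.
have idem := pencil_idem x; rewrite /= !P_add !Q_add !P_scale !Q_scale in idem.
rewrite [P (P x)]P_idem [Q (Q x)]Q_idem scalerDr scalerA in idem.
apply: (scalerI a_neq0); rewrite scaler0.
move/eqP: idem; rewrite -subr_eq0 => /eqP <-.
rewrite !scalerDr scalerA mulrBr mulr1 scalerBl !addrA.
rewrite [a *: P x + Q x]addrC addrKA [RHS]addrAC.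
by rewrite (addrAC (_ *: P x) (- _)).
Qed.

Lemma idempotent_pencil_scale x0 : P x0 != 0 -> a = 1 \/ a = -1.
Proof.
move=> u_neq0; set u := P x0 in u_neq0; set v := Q u.
have Pu : P u = u by exact: P_idem.
have P0 : P 0 = 0 by have := P_scale 0 0; rewrite !scale0r.
have Q0 : Q 0 = 0 by have := Q_scale 0 0; rewrite !scale0r.
have rel_u : (a - 1) *: u + P v + v = 0.
  by have := idempotent_pencil_relation u; rewrite Pu.
have Pv : P v = v.
  have := congr1 P rel_u; rewrite P0 !P_add P_scale Pu [P (P v)]P_idem.
  by rewrite -rel_u => /addrI.
have two_v : v + v = (1 - a) *: u.
  by apply/eqP; rewrite -opprB scaleNr -addr_eq0 addrC addrA -{1}Pv rel_u.
have a1_v : (a + 1) *: v = 0.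
  have := congr1 Q rel_u; rewrite Q0 !Q_add Q_scale -/v Pv [Q v]Q_idem.
  by rewrite -/v => <-; rewrite scalerDl scalerBl !scale1r subrK.
have : ((a + 1) * (1 - a)) *: u = 0.
  by rewrite -scalerA -two_v scalerDr a1_v addr0.
move/eqP; rewrite scaler_eq0 (negbTE u_neq0) orbF mulf_eq0.
by rewrite addr_eq0 subr_eq0 => /orP[/eqP|/eqP]; [right | left].
Qed.
End IdempotentPencil.

Section Pencils.
Variables (R : realType) (V : lmodType R[i]) (ip : V -> V -> R[i]) (T : V -> V).

Lemma pencil_at0_idempotent : pencil_at ip T 0 -> idempotent_fun T.
Proof.
move=> [P [Q [_ _ [_ Q_idem] _ hT]]] x /=.
have T_Q y : T y = Q y by rewrite hT scale0r add0r.
by rewrite !T_Q Q_idem.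
Qed.

Lemma idempotent_pencil_at_scale (m : R) :
  idempotent_fun T -> pencil_at ip T m -> m != 0 -> m = 1 \/ m = -1.
Proof.
move=> T_idem [P [Q [[[[P_add P_scale _] _] P_idem] [x0 /eqP Px0_neq0]]]].
move=> [[[Q_add Q_scale _] _] Q_idem] _ hT m_neq0.
have mC_neq0 : (m%:C)%C != 0 :> R[i].
  by rewrite -(rmorph0 (real_complex R)) (inj_eq (@complexI R)).
have pencil_idem : idempotent_fun (fun x => (m%:C)%C *: P x + Q x).
  by move=> x /=; rewrite -!hT; exact: T_idem.
have [] := @idempotent_pencil_scale _ _ P Q _ P_add Q_add P_scale Q_scale
  P_idem Q_idem pencil_idem mC_neq0 _ Px0_neq0.
- by rewrite -(rmorph1 (real_complex R)) => /(@complexI R) ->; left.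
- by rewrite -(rmorphN1 (real_complex R)) => /(@complexI R) ->; right.
Qed.

Lemma pencil_at0_scale (m : R) : pencil_at ip T 0 -> pencil_at ip T m ->
  m = -1 \/ m = 0 \/ m = 1.
Proof.
move=> /pencil_at0_idempotent T_idem T_m.
have [-> | m_neq0] := eqVneq m 0; first by right; left.
have [->|->] := idempotent_pencil_at_scale _ T_idem T_m m_neq0.
  by right; right.
by left.
Qed.

End Pencils.

Theorem proposition3p1 (R : realType) (V : lmodType R[i]) (ip : V -> V -> R[i])
  (hH : complex_hilbert_space ip) (hinf : infinite_dimensional V)
  (T : V -> V) (hT : self_adjoint ip T) (lam mu : R)
  (hlam : pencil_at ip T lam) (hmu : pencil_at ip T mu) :
  (lam = 0 -> mu = -1 \/ mu = 0 \/ mu = 1) /\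
  (mu = 0 -> lam = -1 \/ lam = 0 \/ lam = 1).
Proof.
split=> [lam0 | mu0].
- by move: hlam; rewrite lam0 => /pencil_at0_scale; apply.
- by move: hmu; rewrite mu0 => /pencil_at0_scale; apply.
Qed.
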